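(* Let $G=(V,E)$ be a graph. Then $\mu(G)=\min|E_G(S;V\setminus T)|$, where the minimum ranges over all pairs of disjoint subsets $S,T\subseteq V$ with $|S|>|T|$.
   Context: All graphs are finite and simple. For a graph $G=(V,E)$ on $n$ vertices, a fractional vertex cover is a function $f:V\to[0,\infty)$ with $f(u)+f(v)\ge 1$ for every edge $uv\in E$; $\tau^*(G)$ denotes the minimum of $\sum_{v\in V}f(v)$ over all fractional vertex covers. For $E'\subseteq E$ let $G-E'=(V,E\setminus E')$. Define $\mu(G)=\min\{|E'| : E'\subseteq E,\ \tau^*(G-E')<n/2\}$. For disjoint $S,T\subseteq V$, $E_G(S;V\setminus T)$ denotes the set of edges of $G$ that either have both endpoints in $S$, or have one endpoint in $S$ and the other in $V\setminus(S\cup T)$. *)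

From HB Require Import structures.
From mathcomp Require Import all_boot all_order all_algebra.
From mathcomp Require Import classical_sets reals.
Set Implicit Arguments. Unset Strict Implicit. Unset Printing Implicit Defensive.
Import Order.TTheory GRing.Theory Num.Theory.
Local Open Scope ring_scope.

Definition simple_graph (T : finType) (adj : rel T) : Prop :=
  symmetric adj /\ irreflexive adj.

Definition edges (T : finType) (adj : rel T) : {set {set T}} :=
  [set [set u; v] | u in T, v in T & adj u v].

Definition remove_edges (T : finType) (adj : rel T) (E' : {set {set T}}) : rel T :=
  fun u v => adj u v && ([set u; v] \notin E').

Definition frac_vertex_cover (R : realType) (T : finType) (adj : rel T)
  (f : T -> R) : Prop :=
  (forall v, 0 <= f v) /\ (forall u v, adj u v -> 1 <= f u + f v).

Definition tau_star (R : realType) (T : finType) (adj : rel T) : R :=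
  inf [set r : R | exists f : T -> R, frac_vertex_cover adj f /\ r = \sum_(v : T) f v].

(* mu(G) = min { |E'| : E' subset of E, tau^*(G - E') < n/2 }.
   (The sentinel #|E|.+1 is only reached when the range is empty, i.e. n = 0.) *)
Definition mu (R : realType) (T : finType) (adj : rel T) : nat :=
  \big[minn/ #|edges adj|.+1]_(E' in powerset (edges adj)
      | tau_star R (remove_edges adj E') < (#|T|%:R / 2%:R : R)) #|E'|.

(* E_G(S; V \ T): edges with both ends in S, or one end in S and the other
   in V \ (S u T). *)
Definition E_G (T : finType) (adj : rel T) (S U : {set T}) : {set {set T}} :=
  [set e in edges adj | [exists u, exists v,
     (e == [set u; v]) && (u \in S) && ((v \in S) || (v \notin S :|: U))]].

Definition mu_rhs (T : finType) (adj : rel T) : nat :=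
  \big[minn/ #|edges adj|.+1]_(p : {set T} * {set T}
      | [disjoint p.1 & p.2] && (#|p.2| < #|p.1|)%N) #|E_G adj p.1 p.2|.

(* Removing E_G(S; V\T) leaves the fractional cover (1 - 1_S + 1_T)/2, of
   weight (n - |S| + |T|)/2 < n/2.  Conversely, let f be a cover of G - E' of
   weight < n/2 and g := f - 1/2, so that sum g < 0.  If every level th > 0
   satisfied #{g <= -th} <= #{g >= th}, then sum g >= 0: cancel the most
   negative value -m against a value >= m and induct on the number of negative
   values.  Hence some th > 0 has #{g >= th} < #{g <= -th}, and S := {g <= -th},
   T := {g >= th} work: every edge of E_G(S; V\T) has f-weight < 1, so it
   lies in E'. *)
From mathcomp Require Import boolp classical_sets reals.
From mathcomp Require Import all_boot all_order all_algebra lra.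
Set Implicit Arguments. Unset Strict Implicit. Unset Printing Implicit Defensive.
Import Order.TTheory GRing.Theory Num.Theory.
Local Open Scope ring_scope.

Section LevelSets.
Variables (R : realDomainType) (T : finType).
Implicit Types (g : T -> R) (u v w : T).

Definition level_balanced g : Prop :=
  forall th : R, 0 < th -> leq #|[set w | g w <= - th]| #|[set w | th <= g w]|.

Definition cancel_into g v u : T -> R :=
  fun w => if w == v then 0 else if w == u then g u + g v else g w.

Section CancelInto.
Variables (g : T -> R) (v u : T).
Hypotheses (neq_uv : u != v) (gv_min : forall w, g v <= g w).
Hypotheses (gv_lt0 : g v < 0) (gu_ge : - g v <= g u).
Let g' := cancel_into g v u.

Let gu_gt0 : 0 < g u.
Proof. by rewrite (lt_le_trans _ gu_ge) // oppr_gt0. Qed.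

Let guv_ge0 : 0 <= g u + g v.
Proof. by rewrite -[g v]opprK subr_ge0. Qed.

Lemma sum_cancel_into : \sum_w g' w = \sum_w g w.
Proof.
have split_vu (h : T -> R) : \sum_w h w = h v + h u + \sum_(w | (w != v) && (w != u)) h w.
  by rewrite (bigD1 v) // (bigD1 u) //= addrA.
rewrite !split_vu /g' /cancel_into eqxx (negbTE neq_uv) eqxx add0r [g v + _]addrC.
by congr (_ + _); apply: eq_bigr => w /andP[/negbTE -> /negbTE ->].
Qed.

Lemma negatives_cancel_into : [set w | g' w < 0] = [set w | g w < 0] :\ v.
Proof.
apply/setP => w; rewrite !inE /g' /cancel_into.
case: (eqVneq w v) => [_|_]; first by rewrite ltxx.
by case: (eqVneq w u) => [->|//]; rewrite !ltNge guv_ge0 (ltW gu_gt0).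
Qed.

Lemma level_balanced_cancel_into : level_balanced g -> level_balanced g'.
Proof.
move=> bal th th_gt0.
have g'E w : w != v -> w != u -> g' w = g w.
  by rewrite /g' /cancel_into => /negbTE -> /negbTE ->.
have sub_low : [set w | g' w <= - th] \subset [set w | g w <= - th] :\ v.
  apply/subsetP => w; rewrite !inE.
  case: (eqVneq w v) => [->|wv].
    by rewrite /g' /cancel_into eqxx oppr_ge0 leNgt th_gt0.
  case: (eqVneq w u) => [->|wu]; last by rewrite g'E.
  rewrite /g' /cancel_into (negbTE neq_uv) eqxx => /(le_trans guv_ge0).
  by rewrite oppr_ge0 leNgt th_gt0.
have sub_high : [set w | th <= g w] :\ u \subset [set w | th <= g' w].
  apply/subsetP => w; rewrite !inE => /andP[wu th_le].
  have wv : w != v by apply: contraTneq th_le => ->; rewrite -ltNge (lt_trans gv_lt0).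
  by rewrite g'E.
apply: leq_trans (subset_leq_card sub_low) _; apply: leq_trans _ (subset_leq_card sub_high).
have [th_le|th_gt] := leP th (- g v).
  have := bal th th_gt0.
  rewrite (cardsD1 v [set w | g w <= - th]) (cardsD1 u [set w | th <= g w]) !inE.
  by rewrite lerNr th_le (le_trans th_le gu_ge).
suff -> : [set w | g w <= - th] = set0 by rewrite set0D cards0.
apply/setP => w; rewrite !inE; apply/negbTE; rewrite -ltNge.
by rewrite (lt_le_trans _ (gv_min w)) // ltrNl.
Qed.

End CancelInto.

Lemma level_balanced_sum_ge0 g : level_balanced g -> 0 <= \sum_w g w.
Proof.
have [k] := ubnP #|[set w | g w < 0]|; elim: k g => // k IH g card_neg bal.
have [no_neg|[v0 v0_neg]] := set_0Vmem [set w | g w < 0].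
  apply: sumr_ge0 => w _; rewrite leNgt; apply/negP => gw_lt0.
  by have := in_set0 w; rewrite -no_neg inE gw_lt0.
have [v _ gv_min] := @arg_minP _ R T v0 xpredT g isT.
have gv_lt0 : g v < 0 by move: v0_neg; rewrite inE; apply/le_lt_trans/gv_min.
have [u] : exists u, u \in [set w | - g v <= g w].
  apply/set0Pn; rewrite -card_gt0 (leq_trans _ (bal _ _)) ?oppr_gt0 //.
  by rewrite card_gt0; apply/set0Pn; exists v; rewrite inE opprK.
rewrite inE => gu_ge.
have neq_uv : u != v.
  by apply: contraTneq gu_ge => ->; rewrite -ltNge (lt_trans gv_lt0) // oppr_gt0.
have gv_le w : g v <= g w := gv_min w isT.
rewrite -(sum_cancel_into g neq_uv); apply: IH; last exact: level_balanced_cancel_into.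
rewrite negatives_cancel_into //; move: card_neg.
by rewrite (cardsD1 v [set w | g w < 0]) inE gv_lt0.
Qed.

Lemma sum_lt0_level_unbalanced g : \sum_w g w < 0 ->
  exists2 th : R, 0 < th & ltn #|[set w | th <= g w]| #|[set w | g w <= - th]|.
Proof.
move=> sum_lt0; apply: contrapT => balanced_levels.
move: sum_lt0; rewrite ltNge level_balanced_sum_ge0 // => th th_gt0.
by rewrite leqNgt; apply/negP => lt; apply: balanced_levels; exists th.
Qed.

End LevelSets.

Lemma set2_addr (T : finType) (V : nmodType) (h : T -> V) (a b u v : T) :
  [set a; b] = [set u; v] -> h a + h b = h u + h v.
Proof.
move=> eq_ab.
have: a \in [set u; v] by rewrite -eq_ab set21.
have: b \in [set u; v] by rewrite -eq_ab set22.
have: u \in [set a; b] by rewrite eq_ab set21.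
have: v \in [set a; b] by rewrite eq_ab set22.
rewrite !inE; do 4 case/orP=> /eqP ?; subst; by [|exact: addrC].
Qed.

Section FractionalCovers.
Variables (R : realType) (T : finType).
Implicit Types (adj : rel T) (f : T -> R).

Lemma tau_star_le_cover adj f : frac_vertex_cover adj f -> tau_star R adj <= \sum_v f v.
Proof.
move=> cover; apply: ge_inf; last by exists f.
by exists 0 => _ [h [[h_ge0 _] ->]]; exact: sumr_ge0.
Qed.

Lemma tau_star_lt_cover adj (r : R) : tau_star R adj < r ->
  exists2 f, frac_vertex_cover adj f & \sum_v f v < r.
Proof.
move=> lt_r; have [|_ [f [cover ->]]] := inf_lt _ lt_r; last by exists f.
by exists (\sum_(v : T) 1); exists (fun=> 1); split => //; split => *; lra.
Qed.

End FractionalCovers.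

Section EdgeCut.
Variables (R : realType) (T : finType) (adj : rel T).
Implicit Types (S U : {set T}) (F : {set {set T}}).

Lemma E_G_sub_edges S U : E_G adj S U \subset edges adj.
Proof. by apply/subsetP => e; rewrite inE => /andP[]. Qed.

Lemma edge_notin_E_G S U a b : [set a; b] \in edges adj ->
  [set a; b] \notin E_G adj S U -> a \in S -> b \in U.
Proof.
move=> ab_edge ab_out aS; apply: contraNT ab_out => bU.
rewrite inE ab_edge; apply/existsP; exists a; apply/existsP; exists b.
by rewrite eqxx aS !inE (negbTE bU) orbF orbN.
Qed.

Lemma sum_indicator (A : {set T}) : \sum_v ((v \in A)%:R : R) = #|A|%:R.
Proof.
by rewrite -sumr_const [RHS]big_mkcond; apply: eq_bigr => v _; case: (v \in A).
Qed.

Lemma tau_star_remove_E_G_lt S U : [disjoint S & U] -> (#|U| < #|S|)%N ->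
  tau_star R (remove_edges adj (E_G adj S U)) < #|T|%:R / 2%:R.
Proof.
move=> dSU ltUS.
pose f v : R := (1 - (v \in S)%:R + (v \in U)%:R) / 2.
have cover : frac_vertex_cover (remove_edges adj (E_G adj S U)) f.
  split=> [v|a b /andP[ab ab_out]].
    by rewrite /f; case: (v \in S); case: (v \in U) => /=; lra.
  have ab_edge : [set a; b] \in edges adj by apply/imset2P; exists a b; rewrite ?inE.
  have ba_edge : [set b; a] \in edges adj by rewrite setUC.
  have ba_out : [set b; a] \notin E_G adj S U by rewrite setUC.
  case aS: (a \in S).
    have bU := edge_notin_E_G ab_edge ab_out aS.
    by rewrite /f aS bU (disjointFr dSU aS) (disjointFl dSU bU) /=; lra.
  case bS: (b \in S).
    have aU := edge_notin_E_G ba_edge ba_out bS.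
    by rewrite /f aS bS aU (disjointFr dSU bS) /=; lra.
  by rewrite /f aS bS; case: (a \in U); case: (b \in U) => /=; lra.
apply: le_lt_trans (tau_star_le_cover cover) _.
rewrite -mulr_suml big_split sumrB /= !sum_indicator sumr_const.
have : (#|U|%:R < #|S|%:R :> R) by rewrite ltr_nat.
rewrite -[1 *+ _]mulr_natl mulr1; lra.
Qed.

Lemma tau_star_lt_half_E_G F : tau_star R (remove_edges adj F) < #|T|%:R / 2%:R ->
  exists S U, [/\ [disjoint S & U], (#|U| < #|S|)%N & E_G adj S U \subset F].
Proof.
case/tau_star_lt_cover=> f [f_ge0 f_cover] sum_lt.
pose g v := f v - 2^-1.
have [th th_gt0 lt_card] : exists2 th : R, 0 < th &
    ltn #|[set w | th <= g w]| #|[set w | g w <= - th]|.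
  apply: sum_lt0_level_unbalanced; move: sum_lt.
  rewrite sumrB sumr_const -[_ *+ _]mulr_natl; lra.
exists [set w | g w <= - th], [set w | th <= g w]; split=> //.
  rewrite -setI_eq0; apply/eqP/setP => w; rewrite !inE.
  by apply/negP => /andP[lo hi]; lra.
apply/subsetP => e; rewrite inE => /andP[/imset2P[a b _]].
rewrite inE => /= ab -> /existsP[u /existsP[v /andP[/andP[/eqP eq_ab uS] vSU]]].
apply: contraT => ab_out; have := f_cover a b.
rewrite /remove_edges ab ab_out (set2_addr f eq_ab) => /(_ isT).
rewrite !inE negb_or -!ltNge /g in uS vSU.
by case/orP: vSU => [vS|/andP[_ vU]]; lra.
Qed.

End EdgeCut.

Theorem corollary6 (R : realType) (T : finType) (adj : rel T) :
  simple_graph adj -> mu R adj = mu_rhs adj.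
Proof.
move=> _; apply/eqP; rewrite eqn_leq; apply/andP; split.
  apply: (le_bigmin (T:=nat)); first exact: (bigmin_le_id (T:=nat)).
  move=> [S U] /andP[/= dSU ltUS]; apply: (bigmin_le_cond (T:=nat)).
  by rewrite powersetE E_G_sub_edges tau_star_remove_E_G_lt.
apply: (le_bigmin (T:=nat)); first exact: (bigmin_le_id (T:=nat)).
move=> F /andP[_ /tau_star_lt_half_E_G [S [U [dSU ltUS sub]]]].
apply: leq_trans (subset_leq_card sub).
by apply: (@bigmin_le_cond _ nat _ _ (S, U)); rewrite /= dSU.
Qed.
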